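(* Let $\mathcal X$ be a finite set with $N=|\mathcal X|\ge 2$, let $c\in(0,1/N]$ and $\varepsilon\ge 0$. If a Markov kernel $K$ from $\mathcal X$ to a finite set $\mathcal Y$ satisfies $K\in\mathcal M(\varepsilon,c)$, then $$\eta_{\mathrm{TV}}(K)\le \min\left\{\frac{e^\varepsilon-1}{e^\varepsilon(1-Nc)+1},\,1\right\}.$$
   Context: A Markov kernel (mechanism) $K$ from $\mathcal X$ to $\mathcal Y$ is a row-stochastic $|\mathcal X|\times|\mathcal Y|$ matrix with entries $K_{Y|X=x}(y)$; for a distribution $P_X$ on $\mathcal X$, $(K\circ P_X)(y)=\sum_x K_{Y|X=x}(y)P_X(x)$. For $P_X$ with full support and $y$ with $(K\circ P_X)(y)>0$, the pointwise maximal leakage (PML) is $\ell_{K\times P_X}(X\to y)=\log\frac{\max_{x\in\mathcal X}K_{Y|X=x}(y)}{(K\circ P_X)(y)}$ (natural log). For $c\in(0,1/N]$, $\mathcal Q_{\mathcal X}(c)=\{P_X\in\mathcal P(\mathcal X):\min_x P_X(x)\ge c\}$. For a set $\mathcal P$ of distributions, $C(K,\mathcal P)=\sup_{P_X\in\mathcal P}\sup_{y:(K\circ P_X)(y)>0}\ell_{K\times P_X}(X\to y)$. $\mathcal M(\varepsilon,c)$ is the set of all kernels $K$ from $\mathcal X$ to some finite output set with $C(K,\mathcal Q_{\mathcal X}(c))\le\varepsilon$ (said to satisfy $(\varepsilon,c)$-PML). The Dobrushin coefficient is $\eta_{\mathrm{TV}}(K)=\sup_{P_X\neq Q_X}\frac{\mathrm{TV}(K\circ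 P_X\|K\circ Q_X)}{\mathrm{TV}(P_X\|Q_X)}=\max_{x\neq x'}\mathrm{TV}(K_{Y|X=x}\|K_{Y|X=x'})$, with $\mathrm{TV}(P\|Q)=\frac12\sum|P-Q|$. *)

From HB Require Import structures.
From mathcomp Require Import all_boot all_order all_algebra.
From mathcomp Require Import all_classical all_reals.
From mathcomp Require Import ereal sequences exp.
Set Implicit Arguments. Unset Strict Implicit. Unset Printing Implicit Defensive.
Import Order.TTheory GRing.Theory Num.Theory.
Local Open Scope ring_scope.

Section PML.
Variables (R : realType) (X Y : finType).

Definition is_distr (P : X -> R) : Prop :=
  (forall x, 0 <= P x) /\ \sum_(x : X) P x = 1.

(* A Markov kernel: row-stochastic matrix, K x y = K_{Y|X=x}(y). *)
Definition is_kernel (K : X -> Y -> R) : Prop :=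
  (forall x y, 0 <= K x y) /\ (forall x, \sum_(y : Y) K x y = 1).

Definition push (K : X -> Y -> R) (P : X -> R) (y : Y) : R :=
  \sum_(x : X) K x y * P x.

Definition maxK (K : X -> Y -> R) (y : Y) : R := \big[Num.max/0]_(x : X) K x y.

Definition pml (K : X -> Y -> R) (P : X -> R) (y : Y) : R :=
  ln (maxK K y / push K P y).

Definition Qc (c : R) : set (X -> R) :=
  [set P | is_distr P /\ forall x, c <= P x].

Definition Ccap (K : X -> Y -> R) (Pset : set (X -> R)) : \bar R :=
  ereal_sup [set l | exists P, Pset P /\ exists y, 0 < push K P y /\ l = (pml K P y)%:E].

Definition in_M (eps c : R) (K : X -> Y -> R) : Prop :=
  is_kernel K /\ (Ccap K (Qc c) <= eps%:E)%E.

Definition TV (P Q : Y -> R) : R := 2^-1 * \sum_(y : Y) `|P y - Q y|.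

Definition eta_TV (K : X -> Y -> R) : R :=
  \big[Num.max/0]_(x : X) \big[Num.max/0]_(x' : X | x' != x) TV (K x) (K x').

End PML.

(* Testing the PML constraint against the vertex distributions of Q_X(c) (mass c everywhere and the
   remaining 1 - N c on a single point v) bounds every entry of a row by the entries of every other
   row: K_u(y) <= e^eps (c S(y) + (1 - N c) K_v(y)) with S(y) = sum_z K_z(y).  Applying this with u
   the larger and v the smaller of two rows at y and summing over y, the identities
   sum_y max = 1 + TV and sum_y min = 1 - TV give 1 + TV <= e^eps (1 - (1 - N c) TV). *)
From HB Require Import structures.
From mathcomp Require Import all_boot all_order all_algebra.
From mathcomp Require Import all_classical all_reals.
From mathcomp Require Import ereal sequences exp.
From mathcomp Require Import ring lra.
Set Implicit Arguments. Unset Strict Implicit.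
Import Order.TTheory GRing.Theory Num.Theory.
Local Open Scope ring_scope.

Section TotalVariation.
Variables (R : realType) (Y : finType) (P Q : Y -> R).
Hypotheses (P1 : \sum_(y : Y) P y = 1) (Q1 : \sum_(y : Y) Q y = 1).

Lemma sum_max_TV : \sum_(y : Y) Num.max (P y) (Q y) = 1 + TV P Q.
Proof.
under eq_bigr => y _ do rewrite maxr_absE.
by rewrite -mulr_suml !big_split /= P1 Q1 /TV; field.
Qed.

Lemma sum_min_TV : \sum_(y : Y) Num.min (P y) (Q y) = 1 - TV P Q.
Proof.
under eq_bigr => y _ do rewrite minr_to_max.
by rewrite sumrB big_split /= P1 Q1 sum_max_TV; ring.
Qed.

Lemma TV_le1 : (forall y, 0 <= P y) -> (forall y, 0 <= Q y) -> TV P Q <= 1.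
Proof.
move=> P0 Q0; have : 0 <= \sum_(y : Y) Num.min (P y) (Q y).
  by apply: sumr_ge0 => y _; rewrite le_min P0 Q0.
by rewrite sum_min_TV subr_ge0.
Qed.

End TotalVariation.

Lemma eta_TV_le (R : realType) (X Y : finType) (K : X -> Y -> R) (b : R) :
  0 <= b -> (forall x x', TV (K x) (K x') <= b) -> eta_TV K <= b.
Proof.
move=> b0 Hb; apply: (big_ind (fun v => v <= b)) => // [u v|x _].
  by rewrite ge_max => -> ->.
apply: (big_ind (fun v => v <= b)) => // u v.
by rewrite ge_max => -> ->.
Qed.

Lemma le_maxK (R : realType) (X Y : finType) (K : X -> Y -> R) u y :
  K u y <= maxK K y.
Proof. by rewrite /maxK (bigD1 u) //= le_max lexx. Qed.

Lemma push_le_maxK (R : realType) (X Y : finType) (K : X -> Y -> R) P y :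
  is_distr P -> push K P y <= maxK K y.
Proof.
move=> [P0 P1]; rewrite -[maxK K y]mulr1 -P1 mulr_sumr /push.
by apply: ler_sum => x _; apply: ler_wpM2r; rewrite ?le_maxK.
Qed.

Lemma push_ge_term (R : realType) (X Y : finType) (K : X -> Y -> R) P u y :
  (forall x, 0 <= K x y) -> (forall x, 0 <= P x) -> K u y * P u <= push K P y.
Proof.
move=> K0 P0; rewrite /push (bigD1 u) //= lerDl.
by apply: sumr_ge0 => x _; rewrite mulr_ge0.
Qed.

Section PMLKernel.
Variables (R : realType) (X Y : finType) (c eps : R) (K : X -> Y -> R).
Hypotheses (c_gt0 : 0 < c) (c_le : c <= (#|X|%:R)^-1) (K_PML : in_M eps c K).

Lemma kernel_ge0 x y : 0 <= K x y.
Proof. by case: K_PML => -[]. Qed.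

Lemma kernel_sum1 x : \sum_(y : Y) K x y = 1.
Proof. by case: K_PML => -[]. Qed.

Lemma residual_mass_ge0 : 0 <= 1 - #|X|%:R * c.
Proof.
have N_gt0 : 0 < (#|X|%:R : R) by rewrite -invr_gt0; exact: lt_le_trans c_le.
by rewrite subr_ge0 -ler_pdivlMl // mulr1.
Qed.

Definition vertex_distr (v : X) (z : X) : R := c + (1 - #|X|%:R * c) * (z == v)%:R.

Lemma vertex_distr_Qc v : Qc c (vertex_distr v).
Proof.
have w0 := residual_mass_ge0.
split; last by move=> z; rewrite lerDl mulr_ge0.
split; first by move=> z; rewrite addr_ge0 ?mulr_ge0 // ltW.
have point_mass : \sum_(z : X) (z == v)%:R = 1 :> R.
  by rewrite (bigD1 v) //= eqxx big1 ?addr0 // => z /negbTE ->.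
by rewrite big_split /= sumr_const -mulr_sumr point_mass -mulr_natr; ring.
Qed.

Lemma push_vertex_distr v y :
  push K (vertex_distr v) y = c * \sum_(z : X) K z y + (1 - #|X|%:R * c) * K v y.
Proof.
rewrite /push /vertex_distr; under eq_bigr => z _ do rewrite mulrDr.
rewrite big_split /= mulr_sumr; congr (_ + _).
  by apply: eq_bigr => z _; rewrite mulrC.
rewrite (bigD1 v) //= eqxx big1 => [|z /negbTE ->]; last by rewrite mulr0 mulr0.
by rewrite addr0 mulr1 mulrC.
Qed.

Lemma maxK_le_push P y :
  Qc c P -> 0 < push K P y -> maxK K y <= expR eps * push K P y.
Proof.
move=> P_Qc push_gt0; have [P_distr _] := P_Qc.
have ratio_gt0 : 0 < maxK K y / push K P y.
  by rewrite divr_gt0 // (lt_le_trans push_gt0) ?push_le_maxK.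
have : pml K P y <= eps.
  case: K_PML => _ /ereal_supP /(_ (pml K P y)%:E); rewrite lee_fin; apply.
  by exists P; split; last exists y.
by rewrite /pml -ler_expR lnK // ler_pdivrMr // mulrC.
Qed.

Lemma kernel_le_push P u y : Qc c P -> K u y <= expR eps * push K P y.
Proof.
move=> P_Qc; have [[P0 _] P_ge] := P_Qc.
have [Ku_gt0|Ku_le0] := ltP 0 (K u y); last first.
  apply: (le_trans Ku_le0); rewrite mulr_ge0 ?expR_ge0 //.
  by apply: sumr_ge0 => x _; rewrite mulr_ge0 ?kernel_ge0.
apply: (le_trans (le_maxK K u y)); apply: maxK_le_push => //.
apply: (lt_le_trans _ (push_ge_term u (kernel_ge0^~ y) P0)).
by rewrite mulr_gt0 // (lt_le_trans c_gt0).
Qed.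

Lemma max_le_vertex_bound x x' y :
  Num.max (K x y) (K x' y) <=
  expR eps * (c * \sum_(z : X) K z y + (1 - #|X|%:R * c) * Num.min (K x y) (K x' y)).
Proof.
case: (leP (K x y) (K x' y)) => _;
  by rewrite -push_vertex_distr; apply: kernel_le_push; apply: vertex_distr_Qc.
Qed.

Lemma sum_kernel_columns : \sum_(y : Y) \sum_(z : X) K z y = #|X|%:R.
Proof.
rewrite exchange_big /=; under eq_bigr => z _ do rewrite kernel_sum1.
by rewrite sumr_const.
Qed.

Lemma TV_rows_le x x' :
  TV (K x) (K x') * (expR eps * (1 - #|X|%:R * c) + 1) <= expR eps - 1.
Proof.
have : \sum_(y : Y) Num.max (K x y) (K x' y) <= \sum_(y : Y) expR eps *
    (c * \sum_(z : X) K z y + (1 - #|X|%:R * c) * Num.min (K x y) (K x' y)).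
  by apply: ler_sum => y _; apply: max_le_vertex_bound.
rewrite sum_max_TV ?kernel_sum1 // -mulr_sumr big_split /= -!mulr_sumr.
rewrite sum_min_TV ?kernel_sum1 // sum_kernel_columns.
set e := expR eps; set w := 1 - _ * c; set T := TV _ _.
have -> : c * #|X|%:R = 1 - w by rewrite /w; ring.
by move=> bound; nra.
Qed.

End PMLKernel.

Theorem theorem1 (R : realType) (X Y : finType) (c eps : R)
  (K : X -> Y -> R) :
  (2 <= #|X|)%N ->
  0 < c -> c <= (#|X|%:R)^-1 ->
  0 <= eps ->
  in_M eps c K ->
  eta_TV K <= Num.min ((expR eps - 1) / (expR eps * (1 - #|X|%:R * c) + 1)) 1.
Proof.
move=> _ c_gt0 c_le eps_ge0 K_PML.
have e_ge1 : 1 <= expR eps by rewrite -expR0 ler_expR.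
have den_gt0 : 0 < expR eps * (1 - #|X|%:R * c) + 1.
  by rewrite ltr_wpDl ?mulr_ge0 ?expR_ge0 ?(residual_mass_ge0 c_gt0 c_le).
apply: eta_TV_le => [|x x'].
  by rewrite le_min ler01 divr_ge0 ?subr_ge0 // ltW.
rewrite le_min ler_pdivlMr // (TV_rows_le c_gt0 c_le K_PML) /=.
by apply: TV_le1 => *; rewrite ?(kernel_sum1 K_PML) ?(kernel_ge0 K_PML).
Qed.
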